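(* Let $n\ge0$, $h\ge1$, and $t$ an even natural number. Suppose the variety $\mathcal V$ has $n+2$ Gumm terms and satisfies $\alpha(\beta\circ_{2h+1}\alpha\gamma)\subseteq\alpha\beta\circ_t\alpha\gamma$. Then $\mathcal V$ satisfies $$\alpha(\beta\circ_{4h+3}\alpha\gamma)\subseteq\alpha\beta\circ_{t+(4h+2)n}\alpha\gamma,$$ and, more generally, for every $p\ge1$, $\mathcal V$ satisfies $\alpha(\beta\circ_z\alpha\gamma)\subseteq\alpha\beta\circ_{t'}\alpha\gamma$, where $z=2^p(h+1)-1$ and $t'=t+(2^{p+1}-4)hn+(2^{p+1}-2p-2)n$.
   Context: Here $\alpha,\beta,\gamma$ range over congruences of algebras in $\mathcal V$. $\circ$ is relational composition, juxtaposition is intersection. For relations $X,Y$ and $m\ge1$, $X\circ_m Y$ denotes $X\circ Y\circ X\circ\cdots$ with $m$ factors. A variety has $n+2$ Gumm terms if it has ternary terms $p,j_1,\dots,j_{n+1}$ satisfying: $x=j_i(x,y,x)$ for all $i$; $x=p(x,z,z)$; $p(x,x,z)=j_1(x,x,z)$; $j_i(x,z,z)=j_{i+1}(x,z,z)$ for odd $i\le n$; $j_i(x,x,z)=j_{i+1}(x,x,z)$ for even $i\le n$; $j_{n+1}(x,y,z)=z$. *)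

From Stdlib Require Import Arith Vectors.Fin.

Set Implicit Arguments.

Record signature := Signature {
  op : Type;
  arity : op -> nat
}.

Inductive term (S : signature) (X : Type) : Type :=
| Var : X -> term S X
| App : forall f : op S, (Fin.t (arity S f) -> term S X) -> term S X.
Arguments Var {S X}.
Arguments App {S X}.

Record algebra (S : signature) := Algebra {
  carrier :> Type;
  interp : forall f : op S, (Fin.t (arity S f) -> carrier) -> carrier
}.

Fixpoint eval (S : signature) (A : algebra S) (X : Type) (env : X -> A)
  (t : term S X) : A :=
  match t with
  | Var x => env x
  | App f ts => interp A f (fun k => eval A env (ts k))
  end.

(* A variety, given as the class of models of a set of identities
   (Birkhoff: equational classes = varieties). Identities use variables nat. *)
Record variety := Variety {
  vsig : signature;
  vaxioms : term vsig nat * term vsig nat -> Prop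
}.

Definition satisfies_identity (S : signature) (A : algebra S)
  (e : term S nat * term S nat) : Prop :=
  forall env : nat -> A, eval A env (fst e) = eval A env (snd e).

Definition in_variety (V : variety) (A : algebra (vsig V)) : Prop :=
  forall e, vaxioms V e -> satisfies_identity A e.

Inductive var3 := vx | vy | vz.

Definition tern (S : signature) (A : algebra S) (t : term S var3) (a b c : A) : A :=
  eval A (fun v => match v with vx => a | vy => b | vz => c end) t.

(* V has n+2 Gumm terms p, j_1, ..., j_{n+1} (j i is j_i, only 1<=i<=n+1 used). *)
Definition has_Gumm_terms (V : variety) (n : nat) : Prop :=
  exists (p : term (vsig V) var3) (j : nat -> term (vsig V) var3),
    forall A : algebra (vsig V), in_variety V A ->
    forall x y z : A,
      (forall i, 1 <= i <= n + 1 -> tern A (j i) x y x = x) /\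
      tern A p x z z = x /\
      tern A p x x z = tern A (j 1) x x z /\
      (forall i, 1 <= i <= n -> Nat.odd i = true ->
         tern A (j i) x z z = tern A (j (i + 1)) x z z) /\
      (forall i, 1 <= i <= n -> Nat.even i = true ->
         tern A (j i) x x z = tern A (j (i + 1)) x x z) /\
      tern A (j (n + 1)) x y z = z.

Definition congruence (S : signature) (A : algebra S) (R : A -> A -> Prop) : Prop :=
  (forall a, R a a) /\
  (forall a b, R a b -> R b a) /\
  (forall a b c, R a b -> R b c -> R a c) /\
  (forall (f : op S) (u v : Fin.t (arity S f) -> A),
      (forall k, R (u k) (v k)) -> R (interp A f u) (interp A f v)).

Definition rcomp (T : Type) (X Y : T -> T -> Prop) : T -> T -> Prop :=
  fun a c => exists b, X a b /\ Y b c.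

Definition rinter (T : Type) (X Y : T -> T -> Prop) : T -> T -> Prop :=
  fun a b => X a b /\ Y a b.

(* X o_m Y = X o Y o X o ... with m factors; by convention X o_0 Y is the
   identity relation (only relevant for the degenerate case t = 0). *)
Fixpoint circ_m (T : Type) (m : nat) (X Y : T -> T -> Prop) : T -> T -> Prop :=
  match m with
  | 0 => fun a b => a = b
  | 1 => X
  | S k => rcomp X (circ_m k Y X)
  end.

Definition satisfies_incl (V : variety) (m k : nat) : Prop :=
  forall (A : algebra (vsig V)), in_variety V A ->
  forall alpha beta gamma : A -> A -> Prop,
    congruence A alpha -> congruence A beta -> congruence A gamma ->
    forall a b : A,
      rinter alpha (circ_m m beta (rinter alpha gamma)) a b ->
      circ_m k (rinter alpha beta) (rinter alpha gamma) a b.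

From Stdlib Require Import Arith Lia Relation_Definitions.

(* Let z be odd, T even, and let a alpha b be joined by a chain of
   2z + 1 alternating beta- and (alpha gamma)-steps.  Applying p(a, -, -) to the i-th
   and the mirrored (2z + 1 - i)-th points folds the chain into one of length z from
   p(a,a,b) to an element (alpha gamma)-related to p(a,d,d) = a; by hypothesis this
   gives T alternating steps between a and p(a,a,b) = j_1(a,a,b).  Next, the image of
   the chain under x |-> j_i(a,x,b) consists of alpha-steps (every j_i(a,x,b) is
   alpha-related to j_i(a,x,a) = a), and by the Gumm identity of the right parity it
   joins j_i(a,a,b) or j_i(a,b,b) to the matching value of j_(i+1); its first step is
   absorbed by the last step of the previous segment, so each j_i costs 2z steps, and
   j_(n+1)(a,x,b) = b.  Iterating the step from z = 2h + 1 gives the closed formulas. *)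

Set Implicit Arguments.
Unset Strict Implicit.

Section Chains.
Variable T : Type.
Implicit Types (P Q : relation T) (u v w : T).

Definition chain P Q (k : nat) u v : Prop :=
  exists f : nat -> T, f 0 = u /\ f k = v /\
    forall i, i < k -> (if Nat.even i then P else Q) (f i) (f (S i)).

Lemma chain_S P Q k u v :
  chain P Q (S k) u v <-> exists w, P u w /\ chain Q P k w v.
Proof.
  split.
  - intros [f [f0 [fk step]]]. exists (f 1). split.
    + rewrite <- f0. exact (step 0 ltac:(lia)).
    + exists (fun i => f (S i)). split; [reflexivity|]. split; [exact fk|].
      intros i Hi. specialize (step (S i) ltac:(lia)).
      rewrite Nat.even_succ, <- Nat.negb_even in step.
      destruct (Nat.even i); exact step.
  - intros [w [Huw [g [g0 [gk step]]]]].
    exists (fun i => match i with 0 => u | S i' => g i' end).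
    split; [reflexivity|]. split; [exact gk|].
    intros [|i] Hi; [rewrite g0; exact Huw|].
    specialize (step i ltac:(lia)). cbn beta iota.
    rewrite Nat.even_succ, <- Nat.negb_even.
    destruct (Nat.even i); exact step.
Qed.

Lemma circ_m_chain P Q k u v : circ_m k P Q u v <-> chain P Q k u v.
Proof.
  revert P Q u v. induction k as [|k IH]; intros P Q u v.
  - split.
    + intros <-. exists (fun _ => u). repeat split. intros i Hi. lia.
    + intros [f [<- [<- _]]]. reflexivity.
  - rewrite chain_S. destruct k as [|k].
    + split.
      * intros Huv. exists v. split; [exact Huv|]. exists (fun _ => v).
        repeat split. intros i Hi. lia.
      * intros [w [Huw [f [<- [<- _]]]]]. exact Huw.
    + change (circ_m (S (S k)) P Q u v) with (rcomp P (circ_m (S k) Q P) u v).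
      split.
      * intros [w [Huw Hwv]]. exists w. split; [exact Huw|]. apply IH, Hwv.
      * intros [w [Huw Hwv]]. exists w. split; [exact Huw|]. apply IH, Hwv.
Qed.

Lemma chain_refl P Q k u : reflexive T P -> reflexive T Q -> chain P Q k u u.
Proof.
  intros HP HQ. exists (fun _ => u). repeat split.
  intros i _. destruct (Nat.even i); [apply HP|apply HQ].
Qed.

Lemma chain_cat P Q m k u w v :
  chain P Q (2 * m) u w -> chain P Q k w v -> chain P Q (2 * m + k) u v.
Proof.
  intros [f [f0 [fm Hf]]] [g [g0 [gk Hg]]].
  exists (fun i => if i <=? 2 * m then f i else g (i - 2 * m)).
  split; [exact f0|]. split.
  - destruct (Nat.leb_spec (2 * m + k) (2 * m)).
    + replace k with 0 in * by lia. rewrite Nat.add_0_r. congruence.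
    + replace (2 * m + k - 2 * m) with k by lia. exact gk.
  - intros i Hi.
    destruct (Nat.leb_spec i (2 * m)), (Nat.leb_spec (S i) (2 * m)); try lia.
    + exact (Hf i ltac:(lia)).
    + replace i with (2 * m) by lia. rewrite fm, <- g0, Nat.even_mul.
      replace (S (2 * m) - 2 * m) with 1 by lia. exact (Hg 0 ltac:(lia)).
    + replace (S i - 2 * m) with (S (i - 2 * m)) by lia.
      replace (Nat.even i) with (Nat.even (i - 2 * m)).
      * exact (Hg (i - 2 * m) ltac:(lia)).
      * replace i with (i - 2 * m + 2 * m) at 2 by lia.
        rewrite Nat.even_add, Nat.even_mul. now destruct (Nat.even (i - 2 * m)).
Qed.

(* A chain of even positive length ends with a [Q]-step, which absorbs one more. *)
Lemma chain_trans_r P Q m u w v : transitive T Q ->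
  chain P Q (2 * m + 2) u w -> Q w v -> chain P Q (2 * m + 2) u v.
Proof.
  intros HQ [f [f0 [fk Hf]]] Hwv.
  exists (fun i => if i =? 2 * m + 2 then v else f i).
  split; [destruct (Nat.eqb_spec 0 (2 * m + 2)); [lia|exact f0]|].
  split; [now rewrite Nat.eqb_refl|].
  intros i Hi. destruct (Nat.eqb_spec i (2 * m + 2)); [lia|].
  destruct (Nat.eqb_spec (S i) (2 * m + 2)); [|exact (Hf i Hi)].
  specialize (Hf i Hi). rewrite e, fk in Hf.
  replace (Nat.even i) with false in *
    by (replace i with (1 + 2 * m) by lia; now rewrite Nat.even_add, Nat.even_mul).
  exact (HQ _ _ _ Hf Hwv).
Qed.

Lemma chain_trans_cat P Q m k u w v : transitive T Q ->
  chain P Q (2 * m + 2) u w -> chain Q P (S k) w v -> chain P Q (2 * m + 2 + k) u v.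
Proof.
  intros HQ Huw [w' [Hww' Hw'v]]%chain_S.
  replace (2 * m + 2) with (2 * (m + 1)) in * by lia.
  apply chain_cat with (w := w'); [|exact Hw'v].
  replace (2 * (m + 1)) with (2 * m + 2) in * by lia.
  eapply chain_trans_r; eassumption.
Qed.

Lemma chain_telescope P Q (s : nat -> T) m k u N : transitive T Q ->
  chain P Q (2 * m + 2) u (s 0) ->
  (forall i, i < N -> chain Q P (S (2 * k)) (s i) (s (S i))) ->
  chain P Q (2 * m + 2 + 2 * k * N) u (s N).
Proof.
  intros HQ Hhead Hlink. induction N as [|N IH].
  - now rewrite Nat.mul_0_r, Nat.add_0_r.
  - replace (2 * m + 2 + 2 * k * S N) with (2 * (m + k * N) + 2 + 2 * k) by lia.
    apply chain_trans_cat with (w := s N); [exact HQ| |].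
    + replace (2 * (m + k * N) + 2) with (2 * m + 2 + 2 * k * N) by lia.
      apply IH. intros i Hi. apply Hlink. lia.
    + apply Hlink. lia.
Qed.

Lemma chain_rev P Q k u v : symmetric T P -> symmetric T Q ->
  chain P Q k u v ->
  chain (if Nat.even k then Q else P) (if Nat.even k then P else Q) k v u.
Proof.
  intros HP HQ [f [f0 [fk Hf]]]. exists (fun i => f (k - i)).
  split; [now rewrite Nat.sub_0_r|]. split; [now rewrite Nat.sub_diag|].
  intros i Hi. specialize (Hf (k - S i) ltac:(lia)).
  replace (S (k - S i)) with (k - i) in Hf by lia.
  assert (Hpar : Nat.even k = Bool.eqb (Nat.even (k - S i)) (negb (Nat.even i))).
  { replace k with (k - S i + S i) at 1 by lia.
    rewrite Nat.even_add, Nat.even_succ, <- Nat.negb_even.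
    now destruct (Nat.even (k - S i)), (Nat.even i). }
  rewrite Hpar. destruct (Nat.even (k - S i)), (Nat.even i); cbn in *; auto.
Qed.

Lemma chain_rev_even P Q k u v : symmetric T P -> symmetric T Q ->
  Nat.even k = true -> chain P Q k u v -> chain Q P k v u.
Proof. intros HP HQ Hk Huv. generalize (chain_rev HP HQ Huv). now rewrite Hk. Qed.

Lemma chain_rev_odd P Q k u v : symmetric T P -> symmetric T Q ->
  Nat.odd k = true -> chain P Q k u v -> chain P Q k v u.
Proof.
  intros HP HQ Hk Huv. generalize (chain_rev HP HQ Huv).
  now rewrite <- Nat.negb_odd, Hk.
Qed.

End Chains.

Section Maps.
Variables T U : Type.

Lemma chain_map (g : T -> U) (P Q : relation T) (P' Q' : relation U) k u v :
  (forall x y, P x y -> P' (g x) (g y)) -> (forall x y, Q x y -> Q' (g x) (g y)) ->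
  chain P Q k u v -> chain P' Q' k (g u) (g v).
Proof.
  intros HP HQ [f [f0 [fk Hf]]]. exists (fun i => g (f i)).
  split; [congruence|]. split; [congruence|].
  intros i Hi. specialize (Hf i Hi). destruct (Nat.even i); auto.
Qed.

(* Pair the [i]-th point of a chain of length [2 z + 1] with its mirror image, the
   [(2 z + 1 - i)]-th point: both steps then have the same parity, and the folded
   chain stops at the middle step, which is a [Q]-step since [z] is odd. *)
Lemma chain_fold (g : T -> T -> U) (P Q : relation T) (P' Q' : relation U) z u v :
  symmetric T P -> symmetric T Q ->
  (forall x x' y y', P x x' -> P y y' -> P' (g x y) (g x' y')) ->
  (forall x x' y y', Q x x' -> Q y y' -> Q' (g x y) (g x' y')) ->
  Nat.odd z = true -> chain P Q (2 * z + 1) u v ->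
  exists c d, Q c d /\ chain P' Q' z (g u v) (g c d).
Proof.
  intros HPs HQs HP HQ Hz [f [f0 [fk Hf]]]. exists (f z), (f (S z)). split.
  { specialize (Hf z ltac:(lia)). now rewrite <- Nat.negb_odd, Hz in Hf. }
  exists (fun i => g (f i) (f (2 * z + 1 - i))).
  split; [now rewrite Nat.sub_0_r, f0, fk|].
  split; [now replace (2 * z + 1 - z) with (S z) by lia|].
  intros i Hi.
  assert (Hmirror : Nat.even (2 * z - i) = Nat.even i).
  { pose proof (Nat.even_add (2 * z - i) i) as E.
    replace (2 * z - i + i) with (2 * z) in E by lia. rewrite Nat.even_mul in E.
    now destruct (Nat.even (2 * z - i)), (Nat.even i). }
  pose proof (Hf i ltac:(lia)) as Hfwd.
  pose proof (Hf (2 * z - i) ltac:(lia)) as Hbwd.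
  rewrite Hmirror in Hbwd. replace (S (2 * z - i)) with (2 * z + 1 - i) in Hbwd by lia.
  replace (2 * z + 1 - S i) with (2 * z - i) by lia.
  destruct (Nat.even i); auto.
Qed.

End Maps.

Section Congruences.
Variables (Sg : signature) (A : algebra Sg).
Implicit Types (R : relation A).

Lemma congruence_refl R : congruence A R -> reflexive A R.
Proof. now intros [? _]. Qed.

Lemma congruence_sym R : congruence A R -> symmetric A R.
Proof. now intros [_ [? _]]. Qed.

Lemma congruence_trans R : congruence A R -> transitive A R.
Proof. now intros [_ [_ [? _]]]. Qed.

Lemma congruence_eval R (V : Type) (e e' : V -> A) :
  congruence A R -> (forall x, R (e x) (e' x)) -> forall t, R (eval A e t) (eval A e' t).
Proof.
  intros [_ [_ [_ Hop]]] He t. induction t as [x|f ts IH]; cbn.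
  - apply He.
  - apply Hop, IH.
Qed.

Lemma congruence_tern R t x y w x' y' w' :
  congruence A R -> R x x' -> R y y' -> R w w' -> R (tern A t x y w) (tern A t x' y' w').
Proof. intros HR Hx Hy Hw. unfold tern. apply congruence_eval; [exact HR|]. now intros []. Qed.

Lemma congruence_rinter R (R' : relation A) :
  congruence A R -> congruence A R' -> congruence A (rinter R R').
Proof.
  intros [r1 [s1 [t1 c1]]] [r2 [s2 [t2 c2]]]. unfold rinter.
  split; [|split; [|split]].
  - auto.
  - intros x y []; auto.
  - intros x y w [] []; eauto.
  - intros f u v H. split; [apply c1|apply c2]; intros k; apply H.
Qed.

End Congruences.

Unset Implicit Arguments.

Definition gumm_identities (Sg : signature) (A : algebra Sg) (p : term Sg var3)
  (j : nat -> term Sg var3) (n : nat) : Prop :=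
  forall x y z : A,
    (forall i, 1 <= i <= n + 1 -> tern A (j i) x y x = x) /\
    tern A p x z z = x /\
    tern A p x x z = tern A (j 1) x x z /\
    (forall i, 1 <= i <= n -> Nat.odd i = true ->
       tern A (j i) x z z = tern A (j (i + 1)) x z z) /\
    (forall i, 1 <= i <= n -> Nat.even i = true ->
       tern A (j i) x x z = tern A (j (i + 1)) x x z) /\
    tern A (j (n + 1)) x y z = z.

Section GummChain.
Variables (Sg : signature) (A : algebra Sg).
Variables (p : term Sg var3) (j : nat -> term Sg var3) (n : nat).
Hypothesis gumm : gumm_identities Sg A p j n.

Lemma gumm_j_idem i x y : 1 <= i <= n + 1 -> tern A (j i) x y x = x.
Proof. now destruct (gumm x y x) as [H _]; apply H. Qed.

Lemma gumm_p_xzz x z : tern A p x z z = x.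
Proof. now destruct (gumm x x z) as [_ [H _]]. Qed.

Lemma gumm_p_xxz x z : tern A p x x z = tern A (j 1) x x z.
Proof. now destruct (gumm x x z) as [_ [_ [H _]]]. Qed.

Lemma gumm_j_odd i x z : 1 <= i <= n -> Nat.odd i = true ->
  tern A (j i) x z z = tern A (j (S i)) x z z.
Proof.
  rewrite <- (Nat.add_1_r i).
  now destruct (gumm x x z) as [_ [_ [_ [H _]]]]; apply H.
Qed.

Lemma gumm_j_even i x z : 1 <= i <= n -> Nat.even i = true ->
  tern A (j i) x x z = tern A (j (S i)) x x z.
Proof.
  rewrite <- (Nat.add_1_r i).
  now destruct (gumm x x z) as [_ [_ [_ [_ [H _]]]]]; apply H.
Qed.

Lemma gumm_j_last x y z : tern A (j (S n)) x y z = z.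
Proof. rewrite <- (Nat.add_1_r n). now destruct (gumm x y z) as [_ [_ [_ [_ [_ H]]]]]. Qed.

Variables alpha beta gamma : relation A.
Hypotheses (Ha : congruence A alpha) (Hb : congruence A beta) (Hc : congruence A gamma).
Local Notation X := (rinter alpha beta).
Local Notation Y := (rinter alpha gamma).
Let HX : congruence A X := congruence_rinter Ha Hb.
Let HY : congruence A Y := congruence_rinter Ha Hc.

Variables z m : nat.
Hypothesis z_odd : Nat.odd z = true.
Hypothesis incl : forall u v, alpha u v -> chain beta Y z u v -> chain X Y (2 * m + 2) u v.

Variables a b : A.
Hypotheses (ab_alpha : alpha a b) (ab_chain : chain beta Y (2 * z + 1) a b).

Let s i := tern A (j (S i)) a (if Nat.even i then a else b) b.

Lemma gumm_chain_head : chain Y X (2 * m + 2) a (s 0).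
Proof.
  assert (p_compat : forall R, congruence A R -> forall x x' y y', R x x' -> R y y' ->
            R (tern A p a x y) (tern A p a x' y')).
  { intros R HR x x' y y' Hx Hy.
    apply congruence_tern; [exact HR|apply (congruence_refl HR)|exact Hx|exact Hy]. }
  destruct (chain_fold (congruence_sym Hb) (congruence_sym HY) (p_compat _ Hb)
              (p_compat _ HY) z_odd ab_chain) as [c [d [Hcd Hqw]]].
  assert (Hw : Y (tern A p a c d) a).
  { apply (congruence_trans HY) with (tern A p a d d).
    - apply p_compat; [exact HY|exact Hcd|apply (congruence_refl HY)].
    - rewrite gumm_p_xzz. apply (congruence_refl HY). }
  assert (Hq : alpha (tern A p a a b) a).
  { apply (congruence_trans Ha) with (tern A p a a a).
    - apply p_compat; [exact Ha|apply (congruence_refl Ha)|].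
      apply (congruence_sym Ha), ab_alpha.
    - rewrite gumm_p_xzz. apply (congruence_refl Ha). }
  apply (chain_rev_even (congruence_sym HX) (congruence_sym HY));
    [now rewrite Nat.even_add, Nat.even_mul|].
  unfold s; cbn. rewrite <- gumm_p_xxz.
  apply chain_trans_r with (w := tern A p a c d); [exact (congruence_trans HY)| |exact Hw].
  apply incl; [|exact Hqw].
  apply (congruence_trans Ha) with a; [exact Hq|]. apply (congruence_sym Ha), Hw.
Qed.

Lemma gumm_chain_link i : i < n -> chain X Y (S (2 * z)) (s i) (s (S i)).
Proof.
  intros Hi. set (g x := tern A (j (S i)) a x b).
  assert (Hg_map : forall R, congruence A R -> forall x y, R x y -> R (g x) (g y)).
  { intros R HR x y Hxy.
    apply congruence_tern; [exact HR|apply (congruence_refl HR)|exact Hxy|].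
    apply (congruence_refl HR). }
  assert (Hg_alpha : forall x, alpha (g x) a).
  { intros x. apply (congruence_trans Ha) with (tern A (j (S i)) a x a).
    - apply congruence_tern; [exact Ha|apply (congruence_refl Ha)..|].
      apply (congruence_sym Ha), ab_alpha.
    - rewrite gumm_j_idem by lia. apply (congruence_refl Ha). }
  assert (Hg : forall u v, chain beta Y (2 * z + 1) u v -> chain X Y (S (2 * z)) (g u) (g v)).
  { intros u v Huv. rewrite <- Nat.add_1_r.
    apply chain_map with (P := beta) (Q := Y); [| apply (Hg_map _ HY) | exact Huv].
    intros x y Hxy. split; [|exact (Hg_map _ Hb x y Hxy)].
    apply (congruence_trans Ha) with a; [apply Hg_alpha|apply (congruence_sym Ha), Hg_alpha]. }
  unfold s. rewrite Nat.even_succ, <- Nat.negb_even.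
  destruct (Nat.even i) eqn:Ei; cbn [negb].
  - rewrite <- (gumm_j_odd (S i)) by (try lia; now rewrite Nat.odd_succ).
    apply (Hg a b ab_chain).
  - rewrite <- (gumm_j_even (S i))
      by (try lia; now rewrite Nat.even_succ, <- Nat.negb_even, Ei).
    apply Hg, (chain_rev_odd (congruence_sym Hb) (congruence_sym HY)); [|exact ab_chain].
    now rewrite Nat.odd_add, Nat.odd_mul.
Qed.

Lemma gumm_chain : chain Y X (2 * m + 2 + 2 * z * n) a b.
Proof.
  replace b with (s n) by apply gumm_j_last.
  apply chain_telescope; [exact (congruence_trans HX)|exact gumm_chain_head|].
  exact gumm_chain_link.
Qed.

End GummChain.

Lemma satisfies_incl_0 (V : variety) z k k' :
  1 <= z -> satisfies_incl V z 0 -> satisfies_incl V k k'.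
Proof.
  intros Hz H0 A HA alpha beta gamma Ha Hb Hc a b _.
  set (full := fun _ _ : A => True).
  assert (Hfull : congruence A full) by (repeat split).
  assert (Hab : a = b).
  { apply (H0 A HA full full full Hfull Hfull Hfull). split; [exact I|].
    apply circ_m_chain. exists (fun i => if i =? 0 then a else b).
    split; [reflexivity|]. split; [now destruct z|].
    intros i _. now destruct (Nat.even i). }
  subst b. apply circ_m_chain, chain_refl.
  - apply (congruence_refl (congruence_rinter Ha Hb)).
  - apply (congruence_refl (congruence_rinter Ha Hc)).
Qed.

Lemma satisfies_incl_double (V : variety) n z T :
  has_Gumm_terms V n -> Nat.odd z = true -> Nat.even T = true ->
  satisfies_incl V z T -> satisfies_incl V (2 * z + 1) (T + 2 * z * n).
Proof.
  intros [p [j gumm]] Hz HT Hincl.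
  destruct (proj1 (Nat.even_spec T) HT) as [[|m] ->].
  { apply satisfies_incl_0 with z; [|exact Hincl]. destruct z; [discriminate|lia]. }
  replace (2 * S m) with (2 * m + 2) in * by lia.
  intros A HA alpha beta gamma Ha Hb Hc a b [Hab Hchain].
  assert (HX := congruence_rinter Ha Hb). assert (HY := congruence_rinter Ha Hc).
  apply circ_m_chain in Hchain. apply circ_m_chain.
  apply (chain_rev_even (congruence_sym HY) (congruence_sym HX));
    [now rewrite !Nat.even_add, !Nat.even_mul|].
  apply (gumm_chain _ A p j n (gumm A HA) alpha beta gamma Ha Hb Hc z m Hz).
  - intros u v Huv Hch. apply circ_m_chain, (Hincl A HA alpha beta gamma Ha Hb Hc).
    split; [exact Huv|]. now apply circ_m_chain.
  - now apply (congruence_sym Ha).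
  - apply (chain_rev_odd (congruence_sym Hb) (congruence_sym HY)); [|exact Hchain].
    now rewrite Nat.odd_add, Nat.odd_mul.
Qed.

Lemma pow2_mul_pred_succ p c : 1 <= c -> 2 ^ S p * c - 1 = 2 * (2 ^ p * c - 1) + 1.
Proof.
  intros Hc. rewrite Nat.pow_succ_r', <- Nat.mul_assoc.
  assert (2 ^ p <> 0) by (apply Nat.pow_nonzero; discriminate).
  assert (0 < 2 ^ p * c) by (apply Nat.mul_pos_pos; lia).
  lia.
Qed.

(* The increment [2 (2^p (h + 1) - 1) n] is what one doubling step adds. *)
Lemma chain_bound_succ p h n t : 1 <= p ->
  t + (2 ^ (S p + 1) - 4) * h * n + (2 ^ (S p + 1) - 2 * S p - 2) * n =
  t + (2 ^ (p + 1) - 4) * h * n + (2 ^ (p + 1) - 2 * p - 2) * n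
    + 2 * (2 ^ p * (h + 1) - 1) * n.
Proof.
  intros Hp.
  assert (Hlin : S p <= 2 ^ p) by (apply Nat.pow_gt_lin_r; lia).
  replace (S p + 1) with (S (S p)) by lia. replace (p + 1) with (S p) by lia.
  rewrite !Nat.pow_succ_r'.
  destruct (Nat.le_exists_sub (S p) (2 ^ p) Hlin) as [d [-> _]].
  destruct p as [|e]; [lia|].
  replace (2 * (2 * (d + S (S e))) - 4) with (4 * (d + S e)) by lia.
  replace (2 * (2 * (d + S (S e))) - 2 * S (S e) - 2) with (4 * d + 2 * S e) by lia.
  replace (2 * (d + S (S e)) - 4) with (2 * (d + e)) by lia.
  replace (2 * (d + S (S e)) - 2 * S e - 2) with (2 * d) by lia.
  replace ((d + S (S e)) * (h + 1) - 1) with ((d + S e) * (h + 1) + h)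
    by (rewrite (Nat.add_succ_r d (S e)), Nat.mul_succ_l; lia).
  ring.
Qed.

Lemma satisfies_incl_iterate (V : variety) n h t :
  has_Gumm_terms V n -> Nat.even t = true -> satisfies_incl V (2 * h + 1) t ->
  forall p, 1 <= p ->
  satisfies_incl V (2 ^ p * (h + 1) - 1)
    (t + (2 ^ (p + 1) - 4) * h * n + (2 ^ (p + 1) - 2 * p - 2) * n).
Proof.
  intros HG Ht Hbase p Hp.
  enough (Hinv : Nat.odd (2 ^ p * (h + 1) - 1) = true /\
    Nat.even (t + (2 ^ (p + 1) - 4) * h * n + (2 ^ (p + 1) - 2 * p - 2) * n) = true /\
    satisfies_incl V (2 ^ p * (h + 1) - 1)
      (t + (2 ^ (p + 1) - 4) * h * n + (2 ^ (p + 1) - 2 * p - 2) * n))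
    by apply Hinv.
  induction p as [|p IH]; [lia|]. destruct p as [|p].
  - replace (2 ^ 1 * (h + 1) - 1) with (2 * h + 1) by (cbn; lia).
    replace (t + (2 ^ (1 + 1) - 4) * h * n + (2 ^ (1 + 1) - 2 * 1 - 2) * n) with t
      by (cbn; lia).
    split; [now rewrite Nat.odd_add, Nat.odd_mul|]. now split.
  - destruct (IH ltac:(lia)) as [Hz [HT Hincl]].
    rewrite pow2_mul_pred_succ, chain_bound_succ by lia.
    split; [now rewrite Nat.odd_add, Nat.odd_mul|].
    split; [now rewrite Nat.even_add, HT, <- Nat.mul_assoc, Nat.even_mul|].
    now apply satisfies_incl_double.
Qed.

Theorem corollary4p9 (V : variety) (n h t : nat) :
  1 <= h ->
  Nat.even t = true ->
  has_Gumm_terms V n ->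
  satisfies_incl V (2 * h + 1) t ->
  satisfies_incl V (4 * h + 3) (t + (4 * h + 2) * n) /\
  (forall p : nat, 1 <= p ->
     satisfies_incl V (2 ^ p * (h + 1) - 1)
       (t + (2 ^ (p + 1) - 4) * h * n + (2 ^ (p + 1) - 2 * p - 2) * n)).
Proof.
  intros _ Ht HG Hbase.
  pose proof (satisfies_incl_iterate V n h t HG Ht Hbase) as Hiter.
  split; [|exact Hiter].
  replace (4 * h + 3) with (2 ^ 2 * (h + 1) - 1) by (cbn; lia).
  replace (t + (4 * h + 2) * n)
    with (t + (2 ^ (2 + 1) - 4) * h * n + (2 ^ (2 + 1) - 2 * 2 - 2) * n) by (cbn; ring).
  apply Hiter. lia.
Qed.
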